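(* Let $K\ge2$, let $(X,Y)$ be a random pair with $X\in\mathbb{R}^d$, $Y\in\{1,\dots,K\}$ with arbitrary joint distribution, and let $\ell:\{1,\dots,K\}^2\to[0,\infty)$ be a task loss. Let $\alpha\in[0,1)\cup(1,\frac{K}{K-1}]$, let $\phi$ be one of $\phi_{\mathrm{LR}},\phi_{\mathrm{LS},\alpha},\phi_{\mathrm{MLS},\alpha},\phi_{\mathrm{LSQ}}$, and let $\bar g\in\operatorname{argmin}_{g:\mathbb{R}^d\to\mathbb{R}^K}\mathbb{E}[\phi(g(X),Y)]$. If $\phi\in\{\phi_{\mathrm{LR}},\phi_{\mathrm{MLS},\alpha},\phi_{\mathrm{LSQ}}\}$, define $h_\ell(v)\in\operatorname{argmin}_{l\in\{1,\dots,K\}}\sum_{k=1}^K q_{\mathrm{L},k}(v)\ell(l,k)$; if $\phi=\phi_{\mathrm{LS},\alpha}$, define $h_\ell(v)\in\operatorname{argmin}_{l\in\{1,\dots,K\}}\sum_{k=1}^K q_{\mathrm{RL},\alpha,k}(v)\ell(l,k)$. Then $\mathbb{E}[\ell(h_\ell(\bar g(X)),Y)]=\inf_{f:\mathbb{R}^d\to\{1,\dots,K\}}\mathbb{E}[\ell(f(X),Y)]$.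
   Context: Notation: $t_k(y)=\mathbb{1}(k=y)$; $s_\alpha(v)=(1-\alpha)v+\frac{\alpha}{K}$ (componentwise), with inverse $s_\alpha^{-1}(u)=(u-\frac{\alpha}{K})/(1-\alpha)$ for $\alpha\ne1$; $q_{\mathrm{L},k}(v)=e^{v_k}/\sum_{l=1}^K e^{v_l}$; $q_{\mathrm{RL},\alpha,k}(v)=s_\alpha^{-1}(q_{\mathrm{L},k}(v))$. The losses for $v\in\mathbb{R}^K$, $y\in\{1,\dots,K\}$ are $\phi_{\mathrm{LR}}(v,y)=-\sum_k t_k(y)\ln q_{\mathrm{L},k}(v)$, $\phi_{\mathrm{LS},\alpha}(v,y)=-\sum_k s_\alpha(t_k(y))\ln q_{\mathrm{L},k}(v)$, $\phi_{\mathrm{MLS},\alpha}(v,y)=-\sum_k s_\alpha(t_k(y))\ln s_\alpha(q_{\mathrm{L},k}(v))$, $\phi_{\mathrm{LSQ}}(v,y)=\sum_k(t_k(y)-q_{\mathrm{L},k}(v))^2$. Minimizations/infima are over measurable functions. *)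

From HB Require Import structures.
From mathcomp Require Import all_boot all_order all_algebra.
From mathcomp Require Import all_classical all_reals all_analysis.
Set Implicit Arguments. Unset Strict Implicit. Unset Printing Implicit Defensive.
Import Order.TTheory GRing.Theory Num.Theory.
Local Open Scope classical_set_scope.
Local Open Scope ring_scope.

Section Losses.
Variables (R : realType) (K : nat).

Definition tgt (y k : 'I_K) : R := if k == y then 1 else 0.
Definition smooth (a u : R) : R := (1 - a) * u + a / K%:R.
Definition smooth_inv (a u : R) : R := (u - a / K%:R) / (1 - a).
Definition qL (v : 'I_K -> R) (k : 'I_K) : R :=
  expR (v k) / \sum_(l < K) expR (v l).
Definition qRL (a : R) (v : 'I_K -> R) (k : 'I_K) : R := smooth_inv a (qL v k).

Definition phi_LR (v : 'I_K -> R) (y : 'I_K) : R :=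
  - \sum_(k < K) tgt y k * ln (qL v k).
Definition phi_LS (a : R) (v : 'I_K -> R) (y : 'I_K) : R :=
  - \sum_(k < K) smooth a (tgt y k) * ln (qL v k).
Definition phi_MLS (a : R) (v : 'I_K -> R) (y : 'I_K) : R :=
  - \sum_(k < K) smooth a (tgt y k) * ln (smooth a (qL v k)).
Definition phi_LSQ (v : 'I_K -> R) (y : 'I_K) : R :=
  \sum_(k < K) (tgt y k - qL v k) ^+ 2.

End Losses.

Inductive loss_kind := LR | LS | MLS | LSQ.

Definition phi (R : realType) (K : nat) (c : loss_kind) (a : R)
  : ('I_K -> R) -> 'I_K -> R :=
  match c with
  | LR => @phi_LR R K
  | LS => @phi_LS R K a
  | MLS => @phi_MLS R K a
  | LSQ => @phi_LSQ R K
  end.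

Definition qdec (R : realType) (K : nat) (c : loss_kind) (a : R)
  : ('I_K -> R) -> 'I_K -> R :=
  match c with
  | LS => @qRL R K a
  | _ => @qL R K
  end.

Definition is_decision_rule (R : realType) (K : nat) (q : ('I_K -> R) -> 'I_K -> R)
  (ell : 'I_K -> 'I_K -> R) (h : ('I_K -> R) -> 'I_K) : Prop :=
  forall v (l : 'I_K), \sum_(k < K) q v k * ell (h v) k <= \sum_(k < K) q v k * ell l k.

Definition measurable_score (R : realType) (d K : nat)
  (g : d.-tuple R -> 'I_K -> R) : Prop :=
  forall k : 'I_K, measurable_fun setT (fun x => g x k).

Definition measurable_classifier (R : realType) (d K : nat)
  (f : d.-tuple R -> 'I_K) : Prop :=
  forall k : 'I_K, measurable (f @^-1` [set k]).

(* Disintegrating over [X], the risk of a score [g] is [E[C(g(X), eta(X))]],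
   where [eta(x)] is the conditional law of [Y] given [X = x] and
   [C(v, p) = sum_y p_y phi(v, y)] is the conditional risk.  For every loss,
   moving the softmax output [qL v] halfway towards its optimal value (the
   posterior [p], or [s_alpha(p)] for label smoothing) never increases
   [C(v, p)] and strictly decreases it unless [qdec v = p]: a quantitative
   Gibbs inequality for the three cross-entropy losses, an exact identity for
   the square loss.  As [gbar] has finite minimal risk, this improvement is
   almost surely null, so [qdec (gbar X)] is almost surely the posterior of
   [Y] given [X], and [h (gbar X)] almost surely minimizes the conditional
   task risk; it is therefore Bayes-optimal among measurable classifiers. *)

From HB Require Import structures.
From mathcomp Require Import all_boot all_order all_algebra.
From mathcomp Require Import all_classical all_reals all_analysis.
From mathcomp.algebra_tactics Require Import ring lra.
Set Implicit Arguments. Unset Strict Implicit.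
Import Order.TTheory GRing.Theory Num.Theory.
Import measurable_realfun.
Local Open Scope classical_set_scope.
Local Open Scope ring_scope.

Section softmax.
Variables (R : realType) (K : nat).
Hypothesis K_gt0 : (0 < K)%N.
Implicit Types (v : 'I_K -> R) (k : 'I_K).

Lemma sum_expR_gt0 v : 0 < \sum_(l < K) expR (v l).
Proof.
rewrite (bigD1 (Ordinal K_gt0)) //=; apply: ltr_pwDl; first exact: expR_gt0.
by apply: sumr_ge0 => i _; exact/ltW/expR_gt0.
Qed.

Lemma qL_gt0 v k : 0 < qL v k.
Proof. by rewrite divr_gt0 ?expR_gt0 ?sum_expR_gt0. Qed.

Lemma sum_qL v : \sum_(k < K) qL v k = 1.
Proof. by rewrite -mulr_suml mulfV // gt_eqF ?sum_expR_gt0. Qed.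

Lemma qL_lt1 v k : (1 < K)%N -> qL v k < 1.
Proof.
move=> K_gt1; have [j jk] : exists j : 'I_K, j != k.
  have [k0|k_gt0] := posnP k; first by exists (Ordinal K_gt1); rewrite -val_eqE /= k0.
  by exists (Ordinal K_gt0); rewrite -val_eqE /= eq_sym -lt0n.
rewrite -(sum_qL v) (bigD1 k) //= ltrDl (bigD1 j) //=.
apply: ltr_pwDl; first exact: qL_gt0.
by apply: sumr_ge0 => i _; exact/ltW/qL_gt0.
Qed.

Lemma qL_ln (p : 'I_K -> R) : (forall k, 0 < p k) -> \sum_(k < K) p k = 1 ->
  qL (fun k => ln (p k)) = p.
Proof.
move=> p_gt0 p1; apply/funext => k; rewrite /qL.
under eq_bigr do rewrite lnK ?posrE //.
by rewrite lnK ?posrE // p1 divr1.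
Qed.

End softmax.

Section midpoint_improvement.
Variables (R : realType) (I : finType).
Implicit Types p q : I -> R.

Definition midpoint p q i := (p i + q i) / 2.
Definition xent p q := - \sum_i p i * ln (q i).
Definition brier p q := \sum_i (p i * (1 - q i) ^+ 2 + (1 - p i) * q i ^+ 2).
Definition sq_discr (x y : R) := (x - y) ^+ 2 / (2 * (x + y)).

Lemma sq_discr_ge0 x y : 0 <= x -> 0 < y -> 0 <= sq_discr x y.
Proof. by move=> x0 y0; rewrite divr_ge0 ?sqr_ge0 //; lra. Qed.

Lemma sq_discr_eq0 x y : 0 <= x -> 0 < y -> sq_discr x y = 0 -> x = y.
Proof.
move=> x0 y0 /eqP; rewrite mulf_eq0 invr_eq0 sqrf_eq0 subr_eq0 => /orP[/eqP //|].
move=> /eqP; lra.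
Qed.

(* [x] times [ln z <= z - 1] at [z = y / m], with [m] the midpoint of [x] and [y]. *)
Lemma ln_midpoint_gap x y : 0 <= x -> 0 < y ->
  sq_discr x y + (x - y) / 2 <= x * ln ((x + y) / 2) - x * ln y.
Proof.
move=> x0 y0; have m0 : 0 < (x + y) / 2 by lra.
have ln_le : ln y - ln ((x + y) / 2) <= y / ((x + y) / 2) - 1.
  rewrite -ln_div ?posrE //; have := @le_ln1Dx R (y / ((x + y) / 2) - 1).
  rewrite addrCA subrr addr0; apply.
  have : 0 < y / ((x + y) / 2) by rewrite divr_gt0.
  lra.
have := ler_wpM2l x0 ln_le.
have -> : x * (y / ((x + y) / 2) - 1) = - (sq_discr x y + (x - y) / 2).
  by rewrite /sq_discr; field; rewrite gt_eqF //; lra.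
lra.
Qed.

Section cross_entropy.
Variables p q : I -> R.
Hypotheses (p_ge0 : forall i, 0 <= p i) (q_gt0 : forall i, 0 < q i).
Hypothesis sum_pq : \sum_i p i = \sum_i q i.

Lemma xent_midpoint_gap :
  xent p (midpoint p q) + \sum_i sq_discr (p i) (q i) <= xent p q.
Proof.
have -> : \sum_i sq_discr (p i) (q i) = \sum_i (sq_discr (p i) (q i) + (p i - q i) / 2).
  by rewrite big_split /= -mulr_suml sumrB sum_pq subrr mul0r addr0.
suff : \sum_i (sq_discr (p i) (q i) + (p i - q i) / 2) <=
       \sum_i (p i * ln ((p i + q i) / 2) - p i * ln (q i)).
  by rewrite sumrB /xent /midpoint; lra.
by apply: ler_sum => i _; exact: ln_midpoint_gap.
Qed.

Let sum_sq_discr_ge0 : 0 <= \sum_i sq_discr (p i) (q i).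
Proof. by apply: sumr_ge0 => i _; exact: sq_discr_ge0. Qed.

Lemma xent_midpoint_le : xent p (midpoint p q) <= xent p q.
Proof. by have := xent_midpoint_gap; have := sum_sq_discr_ge0; lra. Qed.

Lemma xent_midpoint_eq : xent p q <= xent p (midpoint p q) -> p =1 q.
Proof.
move=> le_pq i; apply: sq_discr_eq0 => //.
have sq0 : \sum_j sq_discr (p j) (q j) = 0.
  by have := xent_midpoint_gap; have := sum_sq_discr_ge0; lra.
by apply: (psumr_eq0P _ sq0) => // j _; exact: sq_discr_ge0.
Qed.

End cross_entropy.

Lemma brier_midpoint p q :
  brier p q = brier p (midpoint p q) + 3 / 4 * \sum_i (p i - q i) ^+ 2.
Proof.
rewrite /brier /midpoint mulr_sumr -big_split /=.
by apply: eq_bigr => i _; field.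
Qed.

Let sum_sq_ge0 p q : 0 <= \sum_i (p i - q i) ^+ 2.
Proof. by apply: sumr_ge0 => i _; exact: sqr_ge0. Qed.

Lemma brier_midpoint_le p q : brier p (midpoint p q) <= brier p q.
Proof. by rewrite [leRHS]brier_midpoint lerDl mulr_ge0. Qed.

Lemma brier_midpoint_eq p q : brier p q <= brier p (midpoint p q) -> p =1 q.
Proof.
rewrite [leLHS]brier_midpoint gerDl pmulr_rle0 // => sq_le0 i.
have sq0 : \sum_j (p j - q j) ^+ 2 = 0 by apply/eqP; rewrite eq_le sq_le0 sum_sq_ge0.
apply/eqP; rewrite -subr_eq0 -sqrf_eq0; apply/eqP.
by apply: (psumr_eq0P _ sq0) => // j _; exact: sqr_ge0.
Qed.

End midpoint_improvement.

Section smoothing.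
Variables (R : realType) (K : nat) (a : R).
Hypothesis K_gt1 : (1 < K)%N.
Hypotheses (a_ge0 : 0 <= a) (a_le : a * (K%:R - 1) <= K%:R) (a_neq1 : a != 1).

Let K_gt0 : (0 : R) < K%:R.
Proof. by rewrite ltr0n (ltn_trans _ K_gt1). Qed.

Lemma smooth_affine u : smooth K a u = (1 - u) * smooth K a 0 + u * smooth K a 1.
Proof. by rewrite /smooth; ring. Qed.

Lemma smooth0_ge0 : 0 <= smooth K a 0.
Proof. by rewrite /smooth mulr0 add0r divr_ge0 // ltW. Qed.

Lemma smooth1E : smooth K a 1 = (K%:R - a * (K%:R - 1)) / K%:R.
Proof. by rewrite /smooth; field; rewrite gt_eqF. Qed.

Lemma smooth1_ge0 : 0 <= smooth K a 1.
Proof. by rewrite smooth1E divr_ge0 ?subr_ge0 // ltW. Qed.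

Lemma smooth0_le1 : smooth K a 0 <= 1.
Proof.
rewrite /smooth mulr0 add0r ler_pdivrMr // mul1r.
apply: le_trans a_le; rewrite ler_peMr // lerBrDr.
by rewrite (ler_nat _ 2).
Qed.

Lemma smooth1_le1 : smooth K a 1 <= 1.
Proof.
rewrite smooth1E ler_pdivrMr // mul1r gerBl mulr_ge0 // subr_ge0.
by rewrite ler1n ltnW.
Qed.

Lemma smooth_ge0 u : 0 <= u <= 1 -> 0 <= smooth K a u.
Proof.
move=> /andP[u0 u1]; rewrite smooth_affine.
by rewrite addr_ge0 // mulr_ge0 ?subr_ge0 ?smooth0_ge0 ?smooth1_ge0.
Qed.

Lemma smooth_le1 u : 0 <= u <= 1 -> smooth K a u <= 1.
Proof.
move=> /andP[u0 u1]; rewrite smooth_affine.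
have := smooth0_le1; have := smooth1_le1; have := smooth0_ge0; have := smooth1_ge0.
nra.
Qed.

Lemma smooth_gt0 u : 0 < u < 1 -> 0 < smooth K a u.
Proof.
move=> /andP[u0 u1]; rewrite smooth_affine.
have [s0|s0] := eqVneq (smooth K a 0) 0.
  have a0 : a = 0.
    move/eqP: s0; rewrite /smooth mulr0 add0r mulf_eq0 invr_eq0 (gt_eqF K_gt0).
    by rewrite orbF => /eqP.
  by rewrite s0 /smooth a0 mul0r addr0 subr0 !mulr1 mulr0 add0r.
have s0_gt0 : 0 < smooth K a 0 by rewrite lt_neqAle eq_sym s0 smooth0_ge0.
have := smooth1_ge0; nra.
Qed.

Lemma smooth_inj : injective (smooth K a).
Proof.
move=> u w /addIr /mulfI; apply.
by rewrite subr_eq0 eq_sym.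
Qed.

Lemma smooth_invK : cancel (smooth K a) (smooth_inv K a).
Proof.
move=> u; rewrite /smooth_inv /smooth addrK mulrAC divff ?mul1r //.
by rewrite subr_eq0 eq_sym.
Qed.

Lemma smooth_midpoint u w :
  smooth K a ((u + w) / 2) = (smooth K a u + smooth K a w) / 2.
Proof. by rewrite /smooth; field; rewrite gt_eqF. Qed.

Lemma sum_smooth (p : 'I_K -> R) :
  \sum_(k < K) p k = 1 -> \sum_(k < K) smooth K a (p k) = 1.
Proof.
move=> p1; rewrite big_split /= -mulr_sumr p1 mulr1 sumr_const card_ord.
by rewrite -[_ *+ K]mulr_natr divfK ?subrK ?gt_eqF.
Qed.

End smoothing.

Lemma admissible_smoothing (R : realType) (K : nat) (a : R) : (1 < K)%N ->
  (0 <= a < 1) \/ (1 < a <= K%:R / (K%:R - 1)) ->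
  [/\ 0 <= a, a * (K%:R - 1) <= K%:R & a != 1].
Proof.
move=> K_gt1; have K_ge2 : 2 <= K%:R :> R by rewrite (ler_nat _ 2).
case=> /andP[a_lb a_ub].
- have : a * (K%:R - 1) <= 1 * (K%:R - 1) by rewrite ler_wpM2r ?ltW //; lra.
  by split=> //; [lra | rewrite lt_eqF].
- have K1_gt0 : 0 < K%:R - 1 :> R by lra.
  by split; [lra | rewrite -ler_pdivlMr | rewrite gt_eqF].
Qed.

Section conditional_risk.
Variables (R : realType) (K : nat) (a : R).
Hypothesis K_gt1 : (1 < K)%N.
Hypotheses (a_ge0 : 0 <= a) (a_le : a * (K%:R - 1) <= K%:R) (a_neq1 : a != 1).
Implicit Types (v p : 'I_K -> R).

Let K_gt0 : (0 < K)%N. Proof. exact: ltn_trans K_gt1. Qed.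

Definition cond_risk c v p := \sum_(y < K) p y * phi c a v y.

Lemma phi_ge0 c v y : 0 <= phi c a v y.
Proof.
have tgt01 k : 0 <= tgt R y k <= 1 by rewrite /tgt; case: eqP; rewrite ?lexx ?ler01.
have qL01 k : 0 <= qL v k <= 1 by rewrite !ltW ?qL_gt0 ?qL_lt1.
case: c => /=.
- rewrite oppr_ge0; apply: sumr_le0 => k _; rewrite mulr_ge0_le0 //.
    by case/andP: (tgt01 k).
  by rewrite ln_le0 //; case/andP: (qL01 k).
- rewrite oppr_ge0; apply: sumr_le0 => k _; rewrite mulr_ge0_le0 ?smooth_ge0 //.
  by rewrite ln_le0 //; case/andP: (qL01 k).
- rewrite oppr_ge0; apply: sumr_le0 => k _.
  by rewrite mulr_ge0_le0 ?smooth_ge0 ?ln_le0 ?smooth_le1.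
- by apply: sumr_ge0 => k _; exact: sqr_ge0.
Qed.

(* The softmax output of a minimizer of [cond_risk c _ p]. *)
Definition optimal_qL c p := if c is LS then smooth K a \o p else p.

(* [ln p] itself is no score when [p] has zeros; the midpoint with [qL v] is
   positive and already strictly lowers the conditional risk unless
   [qL v] is optimal. *)
Definition improve_score c v p k := ln (midpoint (optimal_qL c p) (qL v) k).

Section probability_vector.
Variable p : 'I_K -> R.
Hypotheses (p_ge0 : forall k, 0 <= p k) (p_sum1 : \sum_(k < K) p k = 1).

Lemma sum_tgt (F : 'I_K -> R -> R) :
  \sum_(y < K) p y * \sum_(k < K) F k (tgt R y k) =
  \sum_(k < K) (p k * F k 1 + (1 - p k) * F k 0).
Proof.
under eq_bigr do rewrite mulr_sumr.
rewrite exchange_big /=; apply: eq_bigr => k _.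
rewrite (bigD1 k) //= /tgt eqxx; congr (_ + _).
have -> : 1 - p k = \sum_(y < K | y != k) p y.
  by rewrite -p_sum1 (bigD1 k) //= addrC addrK.
by rewrite mulr_suml; apply: eq_bigr => y yk; rewrite eq_sym (negbTE yk).
Qed.

Lemma cond_risk_LR v : cond_risk LR v p = xent p (qL v).
Proof.
rewrite /cond_risk /= /phi_LR; under eq_bigr do rewrite -sumrN.
rewrite (sum_tgt (fun k t => - (t * ln (qL v k)))) /xent -sumrN.
by apply: eq_bigr => k _; ring.
Qed.

Lemma cond_risk_LS v : cond_risk LS v p = xent (smooth K a \o p) (qL v).
Proof.
rewrite /cond_risk /= /phi_LS; under eq_bigr do rewrite -sumrN.
rewrite (sum_tgt (fun k t => - (smooth K a t * ln (qL v k)))) /xent -sumrN.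
by apply: eq_bigr => k _; rewrite /smooth /=; ring.
Qed.

Lemma cond_risk_MLS v :
  cond_risk MLS v p = xent (smooth K a \o p) (smooth K a \o qL v).
Proof.
rewrite /cond_risk /= /phi_MLS; under eq_bigr do rewrite -sumrN.
rewrite (sum_tgt (fun k t => - (smooth K a t * ln (smooth K a (qL v k))))).
rewrite /xent -sumrN.
by apply: eq_bigr => k _; rewrite /smooth /=; ring.
Qed.

Lemma cond_risk_LSQ v : cond_risk LSQ v p = brier p (qL v).
Proof.
rewrite /cond_risk /= /phi_LSQ (sum_tgt (fun k t => (t - qL v k) ^+ 2)).
by apply: eq_bigr => k _; ring.
Qed.

Lemma optimal_qL_ge0 c k : 0 <= optimal_qL c p k.
Proof.
have p_le1 j : p j <= 1.
  by rewrite -p_sum1 (bigD1 j) //= lerDl sumr_ge0.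
by case: c; rewrite /= ?smooth_ge0 ?p_ge0 ?p_le1.
Qed.

Lemma sum_optimal_qL c : \sum_(k < K) optimal_qL c p k = 1.
Proof. by case: c => //=; exact: sum_smooth. Qed.

Lemma qL_improve_score c v :
  qL (improve_score c v p) = midpoint (optimal_qL c p) (qL v).
Proof.
apply: qL_ln => [k|].
  by have := optimal_qL_ge0 c k; have := qL_gt0 K_gt0 v k; rewrite /midpoint; lra.
by rewrite -mulr_suml big_split /= sum_optimal_qL sum_qL //; lra.
Qed.

Let smooth_p_ge0 k : 0 <= (smooth K a \o p) k.
Proof. exact: optimal_qL_ge0 LS k. Qed.

Let sum_smooth_p : \sum_(k < K) (smooth K a \o p) k = 1.
Proof. exact: sum_optimal_qL LS. Qed.

Let smooth_qL_gt0 v k : 0 < (smooth K a \o qL v) k.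
Proof. by rewrite smooth_gt0 ?qL_gt0 ?qL_lt1. Qed.

Let sum_smooth_qL v : \sum_(k < K) (smooth K a \o qL v) k = 1.
Proof. exact/sum_smooth/sum_qL. Qed.

Let smooth_midpointE v : smooth K a \o midpoint p (qL v) =
  midpoint (smooth K a \o p) (smooth K a \o qL v).
Proof. by apply/funext => k; exact: smooth_midpoint. Qed.

Lemma cond_risk_improve_le c v :
  cond_risk c (improve_score c v p) p <= cond_risk c v p.
Proof.
have qL_pos := qL_gt0 K_gt0 v.
case: c.
- rewrite !cond_risk_LR qL_improve_score; apply: xent_midpoint_le => //.
  by rewrite p_sum1 sum_qL.
- rewrite !cond_risk_LS qL_improve_score; apply: xent_midpoint_le => //.
  by rewrite sum_smooth_p sum_qL.
- rewrite !cond_risk_MLS qL_improve_score smooth_midpointE.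
  by apply: xent_midpoint_le => //; rewrite sum_smooth_p sum_smooth_qL.
- by rewrite !cond_risk_LSQ qL_improve_score brier_midpoint_le.
Qed.

Lemma cond_risk_improve_eq c v :
  cond_risk c v p <= cond_risk c (improve_score c v p) p -> qdec c a v =1 p.
Proof.
have qL_pos := qL_gt0 K_gt0 v.
case: c.
- rewrite !cond_risk_LR qL_improve_score => /xent_midpoint_eq eq_pq k.
  by rewrite eq_pq // p_sum1 sum_qL.
- rewrite !cond_risk_LS qL_improve_score => /xent_midpoint_eq eq_pq k.
  by rewrite /= /qRL -eq_pq ?smooth_invK // sum_smooth_p sum_qL.
- rewrite !cond_risk_MLS qL_improve_score smooth_midpointE.
  move=> /xent_midpoint_eq eq_pq k; apply/esym/(smooth_inj a_neq1); apply: eq_pq => //.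
  by rewrite sum_smooth_p sum_smooth_qL.
- rewrite !cond_risk_LSQ qL_improve_score => /brier_midpoint_eq eq_pq k.
  by rewrite eq_pq.
Qed.

End probability_vector.
End conditional_risk.

Lemma ge0_integral_mrestr d (T : measurableType d) (R : realType)
    (mu : {measure set T -> \bar R}) (D : set T) (mD : measurable D)
    (f : T -> \bar R) :
  measurable_fun setT f -> (forall x, (0 <= f x)%E) ->
  (\int[mrestr mu mD]_x f x = \int[mu]_(x in D) f x)%E.
Proof.
move=> mf f0; rewrite -(setUv D) ge0_integral_setU //; last 3 first.
- exact: measurableC.
- by rewrite setUv.
- by rewrite disj_set2E setICr.
rewrite (@null_set_integral _ _ _ (mrestr mu mD) (~` D)) ?adde0 //; last 3 first.
- exact: measurableC.
- exact: measurable_funTS.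
- by rewrite -[LHS]/(mu (~` D `&` D)) setICl measure0.
apply: eq_measure_integral => A mA AD.
by rewrite -[LHS]/(mu (A `&` D)) setIidl.
Qed.

Lemma ae_le_of_integral_ge d (T : measurableType d) (R : realType)
    (mu : {measure set T -> \bar R}) (f g : T -> R) :
  measurable_fun setT f -> measurable_fun setT g ->
  (forall x, 0 <= g x) -> (forall x, g x <= f x) ->
  (\int[mu]_x (f x)%:E < +oo)%E ->
  (\int[mu]_x (f x)%:E <= \int[mu]_x (g x)%:E)%E ->
  {ae mu, forall x, f x <= g x}.
Proof.
move=> mf mg g_ge0 g_le_f f_fin int_f_le_g.
have f_ge0 x : 0 <= f x := le_trans (g_ge0 x) (g_le_f x).
have f_int : mu.-integrable setT (fun x => (f x)%:E).
  apply/integrableP; split; first exact/measurable_EFinP.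
  by under eq_integral do rewrite gee0_abs ?lee_fin //.
have g_int : mu.-integrable setT (fun x => (g x)%:E).
  apply: (le_integrable measurableT _ _ f_int); first exact/measurable_EFinP.
  by move=> x _; rewrite !gee0_abs ?lee_fin.
have mfg : measurable_fun setT (fun x => (f x - g x)%:E).
  exact/measurable_EFinP/measurable_funB.
have /(ae_eq_integral_abs mu measurableT mfg) : (\int[mu]_x `|(f x - g x)%:E| = 0)%E.
  under eq_integral do rewrite gee0_abs ?lee_fin ?subr_ge0 // EFinB.
  have int_g_le_f : (\int[mu]_x (g x)%:E <= \int[mu]_x (f x)%:E)%E.
    by rewrite le_integral // => x _; rewrite lee_fin.
  have int_fg : (\int[mu]_x (g x)%:E = \int[mu]_x (f x)%:E)%E.
    by apply/eqP; rewrite eq_le int_f_le_g int_g_le_f.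
  rewrite integralB // int_fg subee // ge0_fin_numE //.
  by apply: integral_ge0 => x _; rewrite lee_fin.
apply: filterS => x /(_ I) /eqP; rewrite eqe subr_eq0 => /eqP ->.
exact: lexx.
Qed.

Lemma sum_indic_fibers (R : realType) (U : Type) (K : nat) (f : U -> 'I_K)
    (G : 'I_K -> R) u :
  G (f u) = \sum_(y < K) G y * \1_(f @^-1` [set y]) u.
Proof.
rewrite (bigD1 (f u)) //= indicE mem_set // mulr1 big1 ?addr0 // => y yfu.
by rewrite indicE memNset ?mulr0 //= => fuy; rewrite fuy eqxx in yfu.
Qed.

Section measurable_scores.
Context d (S : measurableType d) (R : realType) (K : nat).

Definition measurable_scores (g : S -> 'I_K -> R) :=
  forall k, measurable_fun setT (fun x => g x k).

Definition measurable_fibers (f : S -> 'I_K) :=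
  forall k, measurable (f @^-1` [set k]).

Lemma measurable_comp_fibers (f : S -> 'I_K) (G : 'I_K -> R) :
  measurable_fibers f -> measurable_fun setT (G \o f).
Proof.
move=> mf; rewrite (_ : G \o f = fun x => \sum_(y < K) G y * \1_(f @^-1` [set y]) x).
  by apply: measurable_sum => y; apply: measurable_funM => //; exact: measurable_indic.
by apply/funext => x; exact: sum_indic_fibers.
Qed.

Lemma measurable_qL g k : measurable_scores g ->
  measurable_fun setT (fun x => qL (g x) k).
Proof.
move=> mg; have K_gt0 : (0 < K)%N := leq_ltn_trans (leq0n _) (ltn_ord k).
have qLE x : qL (g x) k = expR (g x k - ln (\sum_(l < K) expR (g x l))).
  by rewrite expRB lnK // posrE sum_expR_gt0.
rewrite (funext qLE); apply: measurableT_comp => //; apply: measurable_funB => //.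
apply: measurableT_comp => //; apply: measurable_sum => l.
exact: measurableT_comp.
Qed.

Lemma measurable_phi c a g y : measurable_scores g ->
  measurable_fun setT (fun x => phi c a (g x) y).
Proof.
move=> mg; have mq k := measurable_qL k mg.
have msmooth (F : S -> R) : measurable_fun setT F ->
    measurable_fun setT (fun x => smooth K a (F x)).
  by move=> mF; apply: measurable_funD => //; exact: measurable_funM.
case: c => /=.
- apply: measurable_funN; apply: measurable_sum => k.
  by apply: measurable_funM => //; exact: measurableT_comp.
- apply: measurable_funN; apply: measurable_sum => k.
  by apply: measurable_funM => //; exact: measurableT_comp.
- apply: measurable_funN; apply: measurable_sum => k.
  by apply: measurable_funM => //; apply: measurableT_comp => //; exact: msmooth.
- apply: measurable_sum => k; apply: measurable_funX.
  exact: measurable_funB.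
Qed.

End measurable_scores.

Section conditional_probability.
Context d (T : measurableType d) (R : realType) (P : probability T R).
Context d' (S : measurableType d') (X : T -> S) (mX : measurable_fun setT X).
Context (K : nat) (Y : T -> 'I_K) (mY : measurable_fibers Y).

Definition joint_law k := pushforward (mrestr P (mY k)) X.

Section joint_law_measure.
Variable k : 'I_K.

Let joint_law0 : joint_law k set0 = 0%E.
Proof. by rewrite /joint_law /pushforward preimage_set0 measure0. Qed.

Let joint_law_ge0 A : (0 <= joint_law k A)%E.
Proof. exact: measure_ge0. Qed.

Let joint_law_sigma_additive : semi_sigma_additive (joint_law k).
Proof. exact: measure_semi_sigma_additive. Qed.

HB.instance Definition _ := isMeasure.Build _ _ _ (joint_law k)
  joint_law0 joint_law_ge0 joint_law_sigma_additive.

Let joint_law_fin : fin_num_fun (joint_law k).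
Proof.
move=> A mA; apply: (fin_num_measure (mrestr P (mY k))).
by rewrite -[X in measurable X]setTI; exact: mX.
Qed.

HB.instance Definition _ := Measure_isFinite.Build _ _ _ (joint_law k) joint_law_fin.

End joint_law_measure.

Definition law_X : probability S R :=
  distribution P (HB.pack X (isMeasurableFun.Build _ _ _ _ X mX)).

Lemma joint_law_dominates k : joint_law k `<< law_X.
Proof.
have mXA A : measurable A -> measurable (X @^-1` A).
  by move=> mA; rewrite -[X in measurable X]setTI; exact: mX.
apply/null_content_dominatesP => A mA PXA0; apply/eqP.
rewrite eq_le measure_ge0 andbT -PXA0.
apply: le_measure; rewrite ?inE //; last exact: mXA.
by apply: measurableI => //; exact: mXA.
Qed.

Lemma ge0_integral_joint_law k (F : S -> R) :
  (forall x, 0 <= F x) -> measurable_fun setT F ->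
  (\int[joint_law k]_x (F x)%:E = \int[P]_(w in Y @^-1` [set k]) (F (X w))%:E)%E.
Proof.
move=> F_ge0 mF; rewrite ge0_integral_pushforward //; last 2 first.
- exact/measurable_EFinP.
- by move=> x _; rewrite lee_fin.
rewrite preimage_setT ge0_integral_mrestr // => [|w]; last by rewrite lee_fin.
exact/measurable_EFinP/measurableT_comp.
Qed.

Definition cond_prob k x :=
  fine (Radon_Nikodym_SigmaFinite.f (joint_law k) law_X x).

Lemma cond_prob_ge0 k x : 0 <= cond_prob k x.
Proof.
exact/fine_ge0/Radon_Nikodym_SigmaFinite.f_ge0/joint_law_dominates.
Qed.

Lemma cond_probE k x :
  (cond_prob k x)%:E = Radon_Nikodym_SigmaFinite.f (joint_law k) law_X x.
Proof.
by rewrite fineK //; exact/Radon_Nikodym_SigmaFinite.f_fin_num/joint_law_dominates.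
Qed.

Lemma measurable_cond_prob k : measurable_fun setT (cond_prob k).
Proof.
apply: measurableT_comp => //; apply: measurable_int.
exact/Radon_Nikodym_SigmaFinite.f_integrable/joint_law_dominates.
Qed.

Lemma integral_cond_prob k (F : S -> R) :
  (forall x, 0 <= F x) -> measurable_fun setT F ->
  (\int[P]_(w in Y @^-1` [set k]) (F (X w))%:E =
   \int[P]_w (F (X w) * cond_prob k (X w))%:E)%E.
Proof.
move=> F_ge0 mF; rewrite -ge0_integral_joint_law //.
rewrite -(Radon_Nikodym_SigmaFinite.change_of_variables (joint_law_dominates k)) //;
  last exact/measurable_EFinP.
under eq_integral do rewrite -cond_probE -EFinM.
rewrite ge0_integral_distribution //.
- by apply/measurable_EFinP/measurable_funM => //; exact: measurable_cond_prob.
- by move=> x; rewrite lee_fin mulr_ge0 ?cond_prob_ge0.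
Qed.

Lemma integral_sum_cond_prob (G : 'I_K -> S -> R) :
  (forall y x, 0 <= G y x) -> (forall y, measurable_fun setT (G y)) ->
  (\int[P]_w (G (Y w) (X w))%:E =
   \int[P]_w (\sum_(y < K) G y (X w) * cond_prob y (X w))%:E)%E.
Proof.
move=> G_ge0 mG.
have mGX y : measurable_fun setT (fun w => G y (X w)) by exact: measurableT_comp.
under eq_integral do rewrite (sum_indic_fibers Y (G^~ (X _))) -sumEFin.
under [RHS]eq_integral do rewrite -sumEFin.
rewrite !ge0_integral_sum //; last 4 first.
- move=> y; apply/measurable_EFinP/measurable_funM => //.
  exact: measurableT_comp (measurable_cond_prob y) mX.
- by move=> y w _; rewrite lee_fin mulr_ge0 ?cond_prob_ge0.
- by move=> y; apply/measurable_EFinP/measurable_funM => //; exact: measurable_indic.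
- by move=> y w _; rewrite lee_fin mulr_ge0 ?indic_ge0.
apply: eq_bigr => y _; rewrite -integral_cond_prob // [RHS]integral_mkcond.
by apply: eq_integral => w _; rewrite epatch_indic EFinM.
Qed.

End conditional_probability.

Section bayes_consistency.
Context d (T : measurableType d) (R : realType) (P : probability T R).
Context d' (S : measurableType d') (X : T -> S) (mX : measurable_fun setT X).
Context (K : nat) (Y : T -> 'I_K) (mY : measurable_fibers Y).
Context (a : R) (c : loss_kind).
Hypothesis K_gt1 : (1 < K)%N.
Hypotheses (a_ge0 : 0 <= a) (a_le : a * (K%:R - 1) <= K%:R) (a_neq1 : a != 1).

Let eta x y := cond_prob P mX mY y x.
Let mass x := \sum_(y < K) eta x y.
(* [eta x] sums to [1] only almost everywhere, hence the renormalization. *)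
Let posterior x y := eta x y / mass x.

Let eta_ge0 x y : 0 <= eta x y.
Proof. exact: cond_prob_ge0. Qed.

Let measurable_eta y : measurable_fun setT (eta^~ y).
Proof. exact: measurable_cond_prob. Qed.

Let mass_ge0 x : 0 <= mass x.
Proof. exact: sumr_ge0. Qed.

(* Also true where [mass x = 0], since then every [eta x y] vanishes. *)
Let etaE x y : eta x y = mass x * posterior x y.
Proof.
have [mass0|mass_neq0] := eqVneq (mass x) 0; last by rewrite mulrC divfK.
by rewrite mass0 mul0r; apply: (psumr_eq0P (fun i _ => eta_ge0 x i) mass0).
Qed.

Let posterior_ge0 x y : 0 <= posterior x y.
Proof. by rewrite divr_ge0. Qed.

Let sum_posterior x : mass x != 0 -> \sum_(y < K) posterior x y = 1.
Proof. by move=> mass_neq0; rewrite -mulr_suml divff. Qed.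

Let measurable_posterior y : measurable_fun setT (posterior^~ y).
Proof.
rewrite (_ : posterior^~ y = fun x => eta x y * mass x `^ (-1)).
  apply: measurable_funM => //; apply: (measurableT_comp (measurable_powR _)).
  exact: measurable_sum.
by apply/funext => x; rewrite powR_inv1.
Qed.

Let cond_risk_mass v x :
  cond_risk a c v (eta x) = mass x * cond_risk a c v (posterior x).
Proof. by rewrite /cond_risk mulr_sumr; apply: eq_bigr => y _; rewrite etaE mulrA. Qed.

Let cond_risk_ge0 v x : 0 <= cond_risk a c v (eta x).
Proof. by apply: sumr_ge0 => y _; rewrite mulr_ge0 ?phi_ge0. Qed.

Let measurable_cond_risk g : measurable_scores g ->
  measurable_fun setT (fun x => cond_risk a c (g x) (eta x)).
Proof.
move=> mg; apply: measurable_sum => y; apply: measurable_funM => //.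
exact: measurable_phi.
Qed.

Lemma risk_cond_risk g : measurable_scores g ->
  (\int[P]_w (phi c a (g (X w)) (Y w))%:E =
   \int[P]_w (cond_risk a c (g (X w)) (eta (X w)))%:E)%E.
Proof.
move=> mg; rewrite (integral_sum_cond_prob P mX mY (G := fun y x => phi c a (g x) y)).
- by apply: eq_integral => w _; congr (_%:E); apply: eq_bigr => y _; rewrite mulrC.
- by move=> y x; exact: phi_ge0.
- by move=> y; exact: measurable_phi.
Qed.

Variable gbar : S -> 'I_K -> R.
Hypothesis mgbar : measurable_scores gbar.

Let gbar_improved x := improve_score a c (gbar x) (posterior x).

Let measurable_gbar_improved : measurable_scores gbar_improved.
Proof.
move=> k; apply: measurableT_comp => //; apply: measurable_funM => //.
apply: measurable_funD; last exact: measurable_qL.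
case: c => //=; apply: measurable_funD => //; exact: measurable_funM.
Qed.

Let risk_gbar x := cond_risk a c (gbar x) (eta x).
Let risk_gbar_improved x := cond_risk a c (gbar_improved x) (eta x).

Let risk_gbar_improved_le x : risk_gbar_improved x <= risk_gbar x.
Proof.
rewrite /risk_gbar /risk_gbar_improved !cond_risk_mass.
have [mass0|mass_neq0] := eqVneq (mass x) 0; first by rewrite mass0 !mul0r.
by rewrite ler_wpM2l // cond_risk_improve_le // sum_posterior.
Qed.

Hypothesis gbar_min : forall g, measurable_scores g ->
  (\int[P]_w (phi c a (gbar (X w)) (Y w))%:E <=
   \int[P]_w (phi c a (g (X w)) (Y w))%:E)%E.

Let risk_gbar_fin : (\int[P]_w (risk_gbar (X w))%:E < +oo)%E.
Proof.
rewrite -risk_cond_risk //.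
have mzero : measurable_scores (fun (_ : S) (_ : 'I_K) => 0 : R).
  by move=> k; exact: measurable_cst.
apply: le_lt_trans (gbar_min mzero) _.
pose M := \sum_(y < K) phi c a (fun=> 0) y.
apply: (@le_lt_trans _ _ (\int[P]_w (cst M%:E) w)%E).
  apply: ge0_le_integral => //.
  - by move=> w _; rewrite lee_fin phi_ge0.
  - exact/measurable_EFinP/(measurable_comp_fibers (phi c a (fun=> 0)) mY).
  - move=> w _; rewrite lee_fin /M (bigD1 (Y w)) //= lerDl.
    by apply: sumr_ge0 => y _; exact: phi_ge0.
rewrite integral_cst // lte_mul_pinfty //.
- by rewrite lee_fin sumr_ge0 // => y _; exact: phi_ge0.
- exact: le_lt_trans (probability_le1 P measurableT) (ltry 1).
Qed.

Let risk_gbar_le_improved :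
  {ae P, forall w, risk_gbar (X w) <= risk_gbar_improved (X w)}.
Proof.
apply: ae_le_of_integral_ge => //.
- exact: measurableT_comp (measurable_cond_risk mgbar) mX.
- exact: measurableT_comp (measurable_cond_risk measurable_gbar_improved) mX.
- by move=> w; exact: cond_risk_ge0.
- rewrite /risk_gbar /risk_gbar_improved -!risk_cond_risk //.
  exact: gbar_min.
Qed.

Variable ell : 'I_K -> 'I_K -> R.
Hypothesis ell_ge0 : forall l k, 0 <= ell l k.
Variable h : ('I_K -> R) -> 'I_K.
Hypothesis hdec : is_decision_rule (qdec c a) ell h.
Hypothesis mh : measurable_fibers (h \o gbar).

Let ell_cond_risk (f : S -> 'I_K) x := \sum_(y < K) ell (f x) y * eta x y.

Let ell_cond_risk_ge0 f x : 0 <= ell_cond_risk f x.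
Proof. by apply: sumr_ge0 => y _; rewrite mulr_ge0. Qed.

Let measurable_ell_cond_risk f : measurable_fibers f ->
  measurable_fun setT (ell_cond_risk f).
Proof.
move=> mf; apply: measurable_sum => y; apply: measurable_funM => //.
exact: (measurable_comp_fibers (ell^~ y) mf).
Qed.

Let ell_risk_cond_risk f : measurable_fibers f ->
  (\int[P]_w (ell (f (X w)) (Y w))%:E = \int[P]_w (ell_cond_risk f (X w))%:E)%E.
Proof.
move=> mf; apply: (integral_sum_cond_prob P mX mY (G := fun y x => ell (f x) y)).
- by move=> y x; exact: ell_ge0.
- by move=> y; exact: (measurable_comp_fibers (ell^~ y) mf).
Qed.

Let bayes_decision x l : risk_gbar x <= risk_gbar_improved x ->
  ell_cond_risk (h \o gbar) x <= ell_cond_risk (fun=> l) x.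
Proof.
rewrite /risk_gbar /risk_gbar_improved /ell_cond_risk !cond_risk_mass => opt.
under eq_bigr do rewrite etaE mulrCA; under [leRHS]eq_bigr do rewrite etaE mulrCA.
rewrite -!mulr_sumr; have [mass0|mass_neq0] := eqVneq (mass x) 0.
  by rewrite mass0 !mul0r.
have mass_gt0 : 0 < mass x by rewrite lt0r mass_neq0 mass_ge0.
rewrite ler_pM2l // in opt; rewrite ler_pM2l //.
have qdec_post := cond_risk_improve_eq K_gt1 a_ge0 a_le a_neq1
  (posterior_ge0 x) (sum_posterior mass_neq0) opt.
have := hdec (gbar x) l; under eq_bigr do rewrite qdec_post mulrC.
by under [X in _ <= X -> _]eq_bigr do rewrite qdec_post mulrC.
Qed.

Lemma risk_decision_le f : measurable_fibers f ->
  (\int[P]_w (ell (h (gbar (X w))) (Y w))%:E <=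
   \int[P]_w (ell (f (X w)) (Y w))%:E)%E.
Proof.
move=> mf; rewrite (ell_risk_cond_risk mh) (ell_risk_cond_risk mf).
apply: ae_ge0_le_integral => //.
- by move=> w _; rewrite lee_fin.
- exact/measurable_EFinP/(measurableT_comp (measurable_ell_cond_risk mh)).
- by move=> w _; rewrite lee_fin.
- exact/measurable_EFinP/(measurableT_comp (measurable_ell_cond_risk mf)).
apply: filterS risk_gbar_le_improved => w opt _.
by rewrite lee_fin; exact: (bayes_decision (f (X w)) opt).
Qed.

Theorem bayes_consistent :
  (\int[P]_w (ell (h (gbar (X w))) (Y w))%:E =
   ereal_inf [set \int[P]_w (ell (f (X w)) (Y w))%:E
             | f in (@measurable_fibers _ S K)])%E.
Proof.
apply/eqP; rewrite eq_le; apply/andP; split.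
- by apply/ereal_infP => _ [f mf <-]; exact: risk_decision_le.
- by apply: ereal_inf_lbound; exists (fun x => h (gbar x)).
Qed.

End bayes_consistency.

Theorem proposition2 (R : realType) (dT : measure_display) (T : measurableType dT)
  (P : probability T R) (d K : nat) (hK : (2 <= K)%N)
  (X : T -> d.-tuple R) (Y : T -> 'I_K)
  (mX : measurable_fun setT X)
  (mY : forall k : 'I_K, measurable (Y @^-1` [set k]))
  (ell : 'I_K -> 'I_K -> R) (ell_ge0 : forall l k, 0 <= ell l k)
  (a : R) (ha : (0 <= a < 1) \/ (1 < a <= K%:R / (K%:R - 1)))
  (c : loss_kind)
  (gbar : d.-tuple R -> 'I_K -> R) (mgbar : measurable_score gbar)
  (gbar_min : forall g : d.-tuple R -> 'I_K -> R, measurable_score g ->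
     (\int[P]_w (phi c a (gbar (X w)) (Y w))%:E <=
      \int[P]_w (phi c a (g (X w)) (Y w))%:E)%E)
  (h : ('I_K -> R) -> 'I_K) (hdec : is_decision_rule (qdec c a) ell h)
  (mh : measurable_classifier (fun x => h (gbar x))) :
  (\int[P]_w (ell (h (gbar (X w))) (Y w))%:E =
   ereal_inf [set \int[P]_w (ell (f (X w)) (Y w))%:E
             | f in measurable_classifier (K := K) (d := d) (R := R)])%E.
Proof.
have [a_ge0 a_le a_neq1] := admissible_smoothing hK ha.
exact: (bayes_consistent mX mY hK a_ge0 a_le a_neq1 mgbar gbar_min ell_ge0 hdec mh).
Qed.
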